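(* Let $m\geq 3$ and let $i,k$ be nonnegative integers with $i+k\leq m$. Write $P_{i,k}:=E^*_{i+k}A_1E^*_{i+k-1}A_1E^*_{i+k-2}\cdots E^*_{i+1}A_1E^*_{i}$. Then: (i) if $i$ is even and $k$ is odd, $P_{i,k}=\big((\tfrac{k-1}{2})!\big)^2\,\tfrac{k+1}{2}\,M^{\frac{k-1}{2},\frac{k-1}{2}}_{\frac{i+k-1}{2},\frac{2m-i}{2}}$; (ii) if $i$ is even and $k\geq2$ is even, $P_{i,k}=\big((\tfrac{k}{2})!\big)^2\,M^{\frac{2m-k}{2},\frac{2m-i-k}{2}}_{\frac{2m-i-k}{2},\frac{2m-i}{2}}$; (iii) if $i$ is odd and $k$ is odd, $P_{i,k}=\big((\tfrac{k-1}{2})!\big)^2\,\tfrac{k+1}{2}\,M^{\frac{k-1}{2},0}_{\frac{2m-i-k}{2},\frac{i-1}{2}}$; (iv) if $i$ is odd and $k\geq 2$ is even, $P_{i,k}=\big((\tfrac{k}{2})!\big)^2\,M^{\frac{2m-k}{2},\frac{i-1}{2}}_{\frac{i+k-1}{2},\frac{i-1}{2}}$.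
   Context: Let $m\geq3$, $S=\{1,\ldots,2m+1\}$, $X$ the set of $m$-subsets of $S$, and $O_{m+1}$ the Odd graph on $X$ (adjacency = disjointness). Its distance is $\partial(x,y)=2|x\cap y|+1$ if $|x\cap y|\leq\lfloor\frac{m-1}{2}\rfloor$ and $2m-2|x\cap y|$ otherwise. Let $x_0=\{1,\ldots,m\}$, $A_1$ the adjacency matrix, and $E^*_i$ ($0\leq i\leq m$) the diagonal $X\times X$ matrix with $(y,y)$-entry $1$ iff $\partial(x_0,y)=i$. For integers $i,j,t,p$, $M^{t,p}_{i,j}$ denotes the $X\times X$ $0/1$-matrix whose $(x,y)$-entry is $1$ iff $|x_0\cap x|=i$, $|x_0\cap y|=j$, $|x\cap y|=t$ and $|x_0\cap x\cap y|=p$. *)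

From mathcomp Require Import all_boot.
Unset Printing Implicit Defensive.

(* Ground set S = {1,...,2m+1}, modelled 0-indexed as 'I_(2m+1). *)
Definition ground (m : nat) := 'I_(2 * m + 1).

(* X = the m-subsets of S (vertex set of the Odd graph O_{m+1}). *)
Definition X (m : nat) := {x : {set ground m} | #|x| == m}.

(* x0 = {1,...,m}, i.e. the 0-indexed elements 0..m-1. *)
Definition x0 (m : nat) : {set ground m} := [set s : ground m | val s < m].

Definition mx (m : nat) := X m -> X m -> nat.

Definition mxmul (m : nat) (A B : mx m) : mx m :=
  fun x y => \sum_(z : X m) A x z * B z y.

(* Distance in O_{m+1}, by the formula given in the paper. *)
Definition odd_dist (m : nat) (x y : {set ground m}) : nat :=
  let t := #|x :&: y| in
  if t <= (m - 1) %/ 2 then 2 * t + 1 else 2 * m - 2 * t.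

(* Adjacency matrix A_1: adjacency = disjointness. *)
Definition A1 (m : nat) : mx m :=
  fun x y => nat_of_bool [disjoint val x & val y].

Definition Estar (m i : nat) : mx m :=
  fun x y => nat_of_bool ((x == y) && (odd_dist m (x0 m) (val y) == i)).

Definition Mtp (m i j t p : nat) : mx m :=
  fun x y => nat_of_bool
    [&& #|x0 m :&: val x| == i, #|x0 m :&: val y| == j,
        #|val x :&: val y| == t & #|x0 m :&: val x :&: val y| == p].

Fixpoint Pchain (m i k : nat) : mx m :=
  match k with
  | 0 => Estar m i
  | k'.+1 => mxmul m (mxmul m (Estar m (i + k'.+1)) (A1 m)) (Pchain m i k')
  end.

From mathcomp Require Import all_boot zify.

(* An entry of P_{i,k} at (x, y) counts walks from x down to y that descend one level of the
   distance partition around x0 at each step.  Relative to x0, a pair (x, y) is described by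
   the sizes of the eight cells of the Venn diagram of x0, x, y, and a neighbour of x is ~x with
   one point w removed, whose parameters relative to (x0, y) depend only on the cell of w.  The
   recursion P_{i,k+1} = E*_{i+k+1} A_1 P_{i,k} thus becomes, by induction on k, a linear
   identity on cell sizes: when x lies in the support of P_{i,k+1}, exactly one cell of ~x
   supplies neighbours in the support of P_{i,k}, and it has k/2 + 1 points.  This gives one
   closed form for all parities, from which the four cases are read off. *)

Lemma card_sum_in (T : finType) (S : {set T}) : #|S| = \sum_(w : T) (w \in S).
Proof. by rewrite -sum1_card big_mkcond; apply: eq_bigr => w _; case: (w \in S). Qed.

Lemma card_setID1 (T : finType) (A B : {set T}) w :
  w \in B -> #|A :&: (B :\ w)| = #|A :&: B| - (w \in A).
Proof. by move=> Bw; rewrite setIDA (cardsD1 w (A :&: B)) inE Bw andbT addKn. Qed.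

Section Venn.
Variables (T : finType) (A B C : {set T}).

Definition venn a b c :=
  #|[set w | [&& (w \in A) == a, (w \in B) == b & (w \in C) == c]]|.

Lemma sum_venn (F : bool -> bool -> bool -> nat) :
  \sum_(w : T) F (w \in A) (w \in B) (w \in C) =
  \sum_(a : bool) \sum_(b : bool) \sum_(c : bool) F a b c * venn a b c.
Proof.
rewrite /venn !big_bool !card_sum_in !big_distrr -!big_split /=.
apply: eq_bigr => w _; rewrite !inE.
by case: (w \in A); case: (w \in B); case: (w \in C);
  rewrite /= ?muln1 ?muln0 ?addn0 ?add0n.
Qed.

Lemma card_venn (E : {set T}) (P : bool -> bool -> bool -> bool) :
  (forall w, (w \in E) = P (w \in A) (w \in B) (w \in C)) ->
  #|E| = \sum_(a : bool) \sum_(b : bool) \sum_(c : bool) P a b c * venn a b c.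
Proof.
by move=> defE; rewrite -sum_venn card_sum_in; apply: eq_bigr => w _; rewrite defE.
Qed.

Lemma card_venn1 :
  #|A| = venn true true true + venn true true false
       + venn true false true + venn true false false.
Proof. by rewrite (@card_venn _ (fun a _ _ => a)) // !big_bool /=; lia. Qed.

Lemma card_venn2 :
  #|B| = venn true true true + venn true true false
       + venn false true true + venn false true false.
Proof. by rewrite (@card_venn _ (fun _ b _ => b)) // !big_bool /=; lia. Qed.

Lemma card_venn3 :
  #|C| = venn true true true + venn true false true
       + venn false true true + venn false false true.
Proof. by rewrite (@card_venn _ (fun _ _ c => c)) // !big_bool /=; lia. Qed.

Lemma card_venn12 : #|A :&: B| = venn true true true + venn true true false.
Proof.
by rewrite (@card_venn _ (fun a b _ => a && b)) => [|w]; rewrite ?inE // !big_bool /=; lia.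
Qed.

Lemma card_venn13 : #|A :&: C| = venn true true true + venn true false true.
Proof.
by rewrite (@card_venn _ (fun a _ c => a && c)) => [|w]; rewrite ?inE // !big_bool /=; lia.
Qed.

Lemma card_venn23 : #|B :&: C| = venn true true true + venn false true true.
Proof.
by rewrite (@card_venn _ (fun _ b c => b && c)) => [|w]; rewrite ?inE // !big_bool /=; lia.
Qed.

Lemma card_venn123 : #|A :&: B :&: C| = venn true true true.
Proof.
rewrite (@card_venn _ (fun a b c => [&& a, b & c])) => [|w]; last by rewrite !inE andbA.
by rewrite !big_bool /=; lia.
Qed.

Lemma card_vennT : #|T| = \sum_(a : bool) \sum_(b : bool) \sum_(c : bool) venn a b c.
Proof.
rewrite -cardsT (@card_venn _ (fun _ _ _ => true)) => [|w]; last by rewrite inE.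
by rewrite !big_bool /= !mul1n.
Qed.

End Venn.

Arguments venn {T} A B C a b c.

Lemma venn_setC2 (T : finType) (A B C : {set T}) a b c :
  venn A (~: B) C a b c = venn A B C a (~~ b) c.
Proof. by apply: eq_card => w; rewrite !inE; case: (w \in B); case: b. Qed.

Lemma card_x0 m : #|x0 m| = m.
Proof.
rewrite -sum1_card (eq_bigl (fun s : ground m => s < m)) => [|s]; last by rewrite inE.
have le_m : m <= 2 * m + 1 by lia.
by rewrite (big_ord_narrow le_m) sum1_card card_ord.
Qed.

Lemma card_X m (x : X m) : #|val x| = m.
Proof. exact: eqP (valP x). Qed.

Lemma card_setCX m (x : X m) : #|~: val x| = m.+1.
Proof. by rewrite cardsCs setCK card_ord card_X; lia. Qed.

Lemma eqX_card_setI m (x y : X m) : (#|val x :&: val y| == m) = (x == y).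
Proof.
apply/eqP/eqP => [xy | -> ]; last by rewrite setIid card_X.
have ex : val x :&: val y = val x.
  by apply/eqP; rewrite eqEcard subsetIl card_X xy leqnn.
have ey : val x :&: val y = val y.
  by apply/eqP; rewrite eqEcard subsetIr card_X xy leqnn.
by apply: val_inj; rewrite -ex ey.
Qed.

Definition meet_of_dist m d := if odd d then d./2 else m - d./2.

Lemma eq_odd_dist m d (S U : {set ground m}) :
  0 < m -> d <= m -> #|S :&: U| <= m ->
  (odd_dist m S U == d) = (#|S :&: U| == meet_of_dist m d).
Proof.
rewrite /odd_dist /meet_of_dist divn2; move: #|_| => t m_gt0 le_dm le_tm.
have := odd_double_half d; have := odd_double_half (m - 1); rewrite -!mul2n.
by case: (odd d) => /= hm hd; case: leqP => ht; apply/eqP/eqP; lia.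
Qed.

Lemma neighbours_X m (x : X m) :
  val @: [set z : X m | [disjoint val x & val z]] = [set ~: val x :\ w | w in ~: val x].
Proof.
apply/setP => S; apply/imsetP/imsetP => [[z] | [w xw ->]].
  rewrite inE disjoint_sym disjoints_subset => zx ->.
  have /cards1P [w xzw] : #|~: val x :\: val z| == 1.
    by rewrite cardsD card_setCX (setIidPr zx) card_X subSnn.
  exists w; first by have := set11 w; rewrite -xzw => /setDP [].
  by rewrite -xzw setDDr setDv set0U (setIidPr zx).
have card_xw : #|~: val x :\ w| == m.
  by apply/eqP; have := cardsD1 w (~: val x); rewrite xw card_setCX /=; lia.
exists (exist (fun S : {set ground m} => #|S| == m) _ card_xw) => //.
by rewrite inE disjoints_subset; apply/subsetP => u ux; rewrite !inE ux andbF.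
Qed.

Lemma sum_A1 m (x : X m) (F : {set ground m} -> nat) :
  \sum_(z : X m) A1 m x z * F (val z) = \sum_(w in ~: val x) F (~: val x :\ w).
Proof.
have inj_xw : {in ~: val x &, injective (fun w => ~: val x :\ w)}.
  move=> w1 w2 xw1 _ /setP /(_ w1); rewrite inE in xw1.
  by rewrite !inE eqxx xw1 /= andbT => /esym /negbFE /eqP.
rewrite -(big_imset F inj_xw) /= -neighbours_X big_imset /=; last exact: in2W val_inj.
rewrite [RHS]big_mkcond; apply: eq_bigr => z _; rewrite inE /A1.
by case: [disjoint _ & _]; rewrite ?mul1n.
Qed.

Lemma PchainS m i k (x y : X m) :
  Pchain m i k.+1 x y =
  (odd_dist m (x0 m) (val x) == i + k.+1) * \sum_(z : X m) A1 m x z * Pchain m i k z y.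
Proof.
rewrite /= /mxmul big_distrr; apply: eq_bigr => z _ /=; rewrite mulnA; congr (_ * _).
rewrite (bigD1 x) //= big1 ?addn0 => [|w /negbTE nwx]; first by rewrite /Estar eqxx.
by rewrite /Estar eq_sym nwx.
Qed.

Definition triple_meet m i k :=
  if odd i then (if odd k then 0 else i./2)
  else (if odd k then k./2 else m - i./2 - k./2).

(* The arguments stand for |x0 :&: x|, |x0 :&: y|, |x :&: y| and |x0 :&: x :&: y|: the support
   of P_{i,k} is d(x0,x) = i+k, d(x0,y) = i, d(x,y) = k, with a prescribed triple meet. *)
Definition chain_params m i k (c01 c02 c12 c012 : nat) :=
  [&& c01 == meet_of_dist m (i + k), c02 == meet_of_dist m i,
      c12 == meet_of_dist m k & c012 == triple_meet m i k].

(* Rewrite every equation [a == b] that lia settles, split on the first remaining one, repeat. *)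
Ltac decide_nat_eqs :=
  repeat match goal with
  | |- context [?a == ?b] =>
      first [ rewrite (_ : (a == b) = true); last by apply/eqP; lia
            | rewrite (_ : (a == b) = false); last by apply/eqP; lia ]
  end; rewrite /=;
  first [ match goal with |- context [?a == ?b] =>
            case: (a =P b) => ?; decide_nat_eqs end
        | lia ].

(* [n a b c] is the size of a Venn cell of (x0, x, y); removing a point w of the cell
   (a, false, c) from ~x gives a neighbour of x with the parameters in the sum. *)
Lemma chain_params_step m i k (n : bool -> bool -> bool -> nat) :
  i + k < m ->
  n true true true + n true true false + n true false true + n true false false = m ->
  n true true true + n true true false + n false true true + n false true false = m ->
  n true true true + n true false true + n false true true + n false false true = m ->
  \sum_(a : bool) \sum_(b : bool) \sum_(c : bool) n a b c = 2 * m + 1 ->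
  (n true true true + n true true false == meet_of_dist m (i + k.+1)) *
  \sum_(a : bool) \sum_(c : bool)
     chain_params m i k (n true false true + n true false false - a)
       (n true true true + n true false true)
       (n true false true + n false false true - c)
       (n true false true - (a && c)) * n a false c =
  k./2.+1 * chain_params m i k.+1 (n true true true + n true true false)
     (n true true true + n true false true) (n true true true + n false true true)
     (n true true true).
Proof.
move=> lt_ikm hx0 hx hy; rewrite !big_bool /= => htot.
rewrite /chain_params /meet_of_dist /triple_meet addnS /= !uphalf_half !halfD !oddD.
rewrite -(odd_double_half i) -(odd_double_half k) -!mul2n in lt_ikm.
by case: (odd i) lt_ikm; case: (odd k) => /= lt_ikm; decide_nat_eqs.
Qed.

Definition chain_pattern m i k (S U : {set ground m}) :=
  chain_params m i k #|x0 m :&: S| #|x0 m :&: U| #|S :&: U| #|x0 m :&: S :&: U|.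

Lemma sum_A1_chain_pattern m i k (x y : X m) :
  let n := venn (x0 m) (val x) (val y) in
  \sum_(z : X m) A1 m x z * chain_pattern m i k (val z) (val y) =
  \sum_(a : bool) \sum_(c : bool)
     chain_params m i k (n true false true + n true false false - a)
       (n true true true + n true false true)
       (n true false true + n false false true - c)
       (n true false true - (a && c)) * n a false c.
Proof.
move=> n; rewrite (sum_A1 _ x (chain_pattern m i k ^~ (val y))).
pose G (a b c : bool) := ~~ b *
  chain_params m i k (#|x0 m :&: ~: val x| - a) #|x0 m :&: val y|
    (#|~: val x :&: val y| - c) (#|x0 m :&: ~: val x :&: val y| - (a && c)).
rewrite big_mkcond (eq_bigr (fun w => G (w \in x0 m) (w \in val x) (w \in val y))) => [|w _].
  rewrite sum_venn !big_bool /G /= !mul0n !add0n !mul1n.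
  rewrite (card_venn12 _ _ (~: val x) (val y)) (card_venn13 _ _ (val x)).
  rewrite (card_venn23 _ (x0 m)) (card_venn123 _ _ (~: val x)) !venn_setC2.
  by rewrite /n.
rewrite /G -in_setC; case: ifP => // xw; rewrite mul1n /chain_pattern.
rewrite card_setID1 // (setIC (~: _ :\ w)) card_setID1 // (setIC (val y)).
by rewrite setIAC card_setID1 // setIAC in_setI.
Qed.

Definition npaths k := (k./2)`! ^ 2 * (if odd k then k./2.+1 else 1).

Lemma npathsS k : npaths k.+1 = k./2.+1 * npaths k.
Proof.
rewrite /npaths /= uphalf_half; case: (odd k); rewrite /= ?add0n ?add1n ?factS; lia.
Qed.

Lemma meet_of_dist0 m : meet_of_dist m 0 = m.
Proof. exact: subn0. Qed.

Lemma triple_meet0 m i : triple_meet m i 0 = meet_of_dist m i.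
Proof. by rewrite /triple_meet /meet_of_dist subn0; case: (odd i). Qed.

Lemma leq_card_x0I m (x : X m) : #|x0 m :&: val x| <= m.
Proof. by rewrite (leq_trans (subset_leq_card (subsetIr _ _))) ?card_X. Qed.

Lemma Pchain0 m i (x y : X m) : 0 < m -> i <= m ->
  Pchain m i 0 x y = npaths 0 * chain_pattern m i 0 (val x) (val y).
Proof.
move=> m_gt0 le_im; rewrite /= /Estar mul1n eq_odd_dist ?leq_card_x0I //.
rewrite /chain_pattern /chain_params addn0 meet_of_dist0 triple_meet0 eqX_card_setI.
case: eqP => [<- | _]; last by rewrite !andbF.
by rewrite -setIA setIid andbb andbb.
Qed.

Lemma Pchain_step m i k (x y : X m) : 0 < m -> i + k < m ->
  (forall z : X m, Pchain m i k z y = npaths k * chain_pattern m i k (val z) (val y)) ->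
  Pchain m i k.+1 x y = npaths k.+1 * chain_pattern m i k.+1 (val x) (val y).
Proof.
move=> m_gt0 lt_ikm IH; rewrite PchainS; under eq_bigr do rewrite IH mulnCA.
rewrite -big_distrr /= sum_A1_chain_pattern eq_odd_dist ?leq_card_x0I //;
  last by rewrite addnS.
rewrite npathsS [_ * npaths k]mulnC -mulnA mulnCA; congr (_ * _).
rewrite /chain_pattern (card_venn12 _ _ _ (val y)) (card_venn13 _ _ (val x)).
rewrite (card_venn23 _ (x0 m)) card_venn123.
apply: chain_params_step => //.
- by rewrite -(card_venn1 _ _ (val x) (val y)) card_x0.
- by rewrite -(card_venn2 _ (x0 m) _ (val y)) card_X.
- by rewrite -(card_venn3 _ (x0 m) (val x)) card_X.
- by rewrite -card_vennT card_ord.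
Qed.

Lemma Pchain_Mtp m i k (x y : X m) : 0 < m -> i + k <= m ->
  Pchain m i k x y = npaths k *
    Mtp m (meet_of_dist m (i + k)) (meet_of_dist m i) (meet_of_dist m k)
          (triple_meet m i k) x y.
Proof.
move=> m_gt0; elim: k x => [|k IHk] x le_ikm.
  by apply: Pchain0; rewrite addn0 in le_ikm.
rewrite addnS in le_ikm.
by apply: Pchain_step => // z; apply: IHk; lia.
Qed.

Lemma npaths_odd k : odd k -> npaths k = ((k - 1) %/ 2)`! ^ 2 * ((k + 1) %/ 2).
Proof.
move=> ok; have := modn2 k; rewrite /npaths ok !divn2 => k2.
by congr (_ `! ^ 2 * _); rewrite -!divn2; lia.
Qed.

Lemma npaths_even k : ~~ odd k -> npaths k = (k %/ 2)`! ^ 2.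
Proof. by move=> /negbTE ok; rewrite /npaths ok muln1 divn2. Qed.

Theorem lemma5p1 (m i k : nat) :
  3 <= m -> i + k <= m ->
  (forall x y : X m,
     [&& ~~ odd i & odd k] ->
     Pchain m i k x y =
       ((k - 1) %/ 2)`! ^ 2 * ((k + 1) %/ 2) *
       Mtp m ((i + k - 1) %/ 2) ((2 * m - i) %/ 2)
             ((k - 1) %/ 2) ((k - 1) %/ 2) x y) /\
  (forall x y : X m,
     [&& ~~ odd i, ~~ odd k & 2 <= k] ->
     Pchain m i k x y =
       (k %/ 2)`! ^ 2 *
       Mtp m ((2 * m - i - k) %/ 2) ((2 * m - i) %/ 2)
             ((2 * m - k) %/ 2) ((2 * m - i - k) %/ 2) x y) /\
  (forall x y : X m,
     [&& odd i & odd k] ->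
     Pchain m i k x y =
       ((k - 1) %/ 2)`! ^ 2 * ((k + 1) %/ 2) *
       Mtp m ((2 * m - i - k) %/ 2) ((i - 1) %/ 2)
             ((k - 1) %/ 2) 0 x y) /\
  (forall x y : X m,
     [&& odd i, ~~ odd k & 2 <= k] ->
     Pchain m i k x y =
       (k %/ 2)`! ^ 2 *
       Mtp m ((i + k - 1) %/ 2) ((i - 1) %/ 2)
             ((2 * m - k) %/ 2) ((i - 1) %/ 2) x y).
Proof.
move=> m_ge3 le_ikm; have m_gt0 : 0 < m by lia.
have [i2 k2] := (modn2 i, modn2 k).
split; [|split; [|split]] => x y.
- case/andP => /negbTE oi ok; rewrite Pchain_Mtp // npaths_odd //.
  congr (_ * Mtp m _ _ _ _ x y);
    rewrite /meet_of_dist /triple_meet ?oddD oi ok /= -?divn2 in i2 k2 *; lia.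
- case/and3P => /negbTE oi ok _; rewrite Pchain_Mtp // npaths_even //.
  congr (_ * Mtp m _ _ _ _ x y);
    rewrite /meet_of_dist /triple_meet ?oddD oi (negbTE ok) /= -?divn2 in i2 k2 *; lia.
- case/andP => oi ok; rewrite Pchain_Mtp // npaths_odd //.
  congr (_ * Mtp m _ _ _ _ x y);
    rewrite /meet_of_dist /triple_meet ?oddD oi ok /= -?divn2 in i2 k2 *; lia.
- case/and3P => oi ok _; rewrite Pchain_Mtp // npaths_even //.
  congr (_ * Mtp m _ _ _ _ x y);
    rewrite /meet_of_dist /triple_meet ?oddD oi (negbTE ok) /= -?divn2 in i2 k2 *; lia.
Qed.
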